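(* For all $1\le i,j\le 7$, \[ \max_{X}\Big\{\sum_{p=(x,y)\in X}W^{i,j}(x,y)\Big\}=\max_{X}\Big\{\sum_{p=(x,y)\in X}W^{j,i}(x,y)\Big\}, \] where each maximum ranges over all finite multisets $X$ of rectangles $p=(x,y)$ (width $x\in(0,1]$, height $y\in(0,1]$) that can be packed without overlap, axis-parallel and without rotation, into a single $1\times1$ square.
   Context: Harmonic weighting function (for a fixed integer parameter $k\ge2$): $W_H(x)=1/i$ if $\frac1{i+1}<x\le\frac1i$ with $1\le i<k$, and $W_H(x)=\frac{k}{k-1}x$ if $0<x\le\frac1k$. $SH+$ is the instance of the Super Harmonic algorithm with $k=50$, $K=6$, $\Delta_1,\dots,\Delta_6=0.294,0.343,0.353,0.375,0.4,0.42$, $t_{51}=\epsilon=1/38$, and for types $i$ the values $(t_i,\alpha_i,\beta_i,\phi(i),\gamma_i)$: 1:$(1,0,1,0,0)$; 2:$(0.706,0,1,1,0)$; 3:$(0.657,0,1,2,0)$; 4:$(0.647,0,1,3,0)$; 5:$(0.625,0,1,4,0)$; 6:$(0.6,0,1,5,0)$; 7:$(0.58,0,1,6,0)$; 8:$(0.5,0,2,0,0)$; 9:$(0.42,0.162,2,0,1)$; 10:$(0.4,0.192,2,0,1)$; 11:$(0.375,0.2346,2,0,1)$; 12:$(0.353,0.3004,2,1,1)$; 13:$(0.343,0.3077,2,1,1)$; 14:$(1/3,0,3,0,0)$; 15:$(0.294,0.0816,3,0,1)$; 16:$(1/4,0.186,4,0,1)$; 17:$(1/5,0.092,5,0,1)$;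 18:$(1/6,0.1456,6,0,1)$; 19:$(0.147,0.2162,6,0,2)$; 20:$(1/7,0.1525,7,0,2)$; for $21\le i\le49$: $(1/(i-13),\ 1.35(50-i)/(37(i-12)),\ i-13,\ 0,\ \lfloor 0.294/t_i\rfloor)$; 50:$(1/37,0,37,0,0)$. Type-$i$ items are those of size in $I_i=(t_{i+1},t_i]$, and $\varphi(i)=\min\{j:t_i\le\Delta_j,1\le j\le 6\}$ ($\varphi(i)=0$ if $t_i>\Delta_6$). Weighting functions $W_B^1,\dots,W_B^7$ of $SH+$ (here $K=6$): with the convention that $\alpha_i/\gamma_i$ terms are $0$ when $\gamma_i=0$, for $x\in I_{51}=(0,1/38]$, $W_B^m(x)=x/(1-1/38)$; for $x\in I_i$, $1\le i\le 50$: $W_B^1(x)=\frac{1-\alpha_i}{\beta_i}$; for $2\le j\le 6$, $W_B^{8-j}(x)$ equals $\frac{1-\alpha_i}{\beta_i}+\frac{\alpha_i}{2\gamma_i}$ if $\phi(i)<j,\varphi(i)<j$; $\frac{1-\alpha_i}{\beta_i}+\frac{\alpha_i}{\gamma_i}$ if $\phi(i)<j,\varphi(i)\ge j$; $\frac{1-\alpha_i}{2\beta_i}+\frac{\alpha_i}{\gamma_i}$ if $\phi(i)\ge j,\varphi(i)\ge j$; $\frac{1-\alpha_i}{2\beta_i}+\frac{\alpha_i}{2\gamma_i}$ if $\phi(i)\ge j,\varphi(i)<j$; and $W_B^{7}(x)$ equals $\frac{1-\alpha_i}{\beta_i}$ if $\phi(i)=\varphi(i)=0$; $\frac{1-\alpha_i}{\beta_i}+\frac{\alpha_i}{\gamma_i}$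 if $\phi(i)=0,\varphi(i)>0$; $0$ if $\phi(i)>0,\varphi(i)=0$; $\frac{\alpha_i}{\gamma_i}$ if $\phi(i)>0,\varphi(i)>0$. For $1\le i,j\le7$ and $x,y\in(0,1]$: $W^{i,j}(x,y)=\frac{W_H(x)W_B^i(y)+W_B^j(x)W_H(y)}{2}$. *)

From HB Require Import structures.
From mathcomp Require Import all_boot all_order all_algebra.
From mathcomp Require Import all_classical all_reals ereal.
Set Implicit Arguments. Unset Strict Implicit. Unset Printing Implicit Defensive.
Import Order.TTheory GRing.Theory Num.Theory.
Local Open Scope ring_scope.

Section SHplus.
Variable R : realType.

(* alpha/gamma with the convention "= 0 when gamma = 0" *)
Definition frac (a g : R) : R := if g == 0 then 0 else a / g.

(* thresholds t_i of SH+ (t_51 = epsilon = 1/38) *)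
Definition t (i : nat) : R :=
  if (21 <= i <= 49)%N then 1 / (i - 13)%:R else
  match i with
  | 1 => 1 | 2 => 706/1000 | 3 => 657/1000 | 4 => 647/1000 | 5 => 625/1000
  | 6 => 6/10 | 7 => 58/100 | 8 => 1/2 | 9 => 42/100 | 10 => 4/10
  | 11 => 375/1000 | 12 => 353/1000 | 13 => 343/1000 | 14 => 1/3
  | 15 => 294/1000 | 16 => 1/4 | 17 => 1/5 | 18 => 1/6 | 19 => 147/1000
  | 20 => 1/7 | 50 => 1/37 | 51 => 1/38 | _ => 0 end.

Definition alpha (i : nat) : R :=
  if (21 <= i <= 49)%N then (135/100) * (50 - i)%:R / (37 * (i - 12)%:R) else
  match i with
  | 9 => 162/1000 | 10 => 192/1000 | 11 => 2346/10000 | 12 => 3004/10000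
  | 13 => 3077/10000 | 15 => 816/10000 | 16 => 186/1000 | 17 => 92/1000
  | 18 => 1456/10000 | 19 => 2162/10000 | 20 => 1525/10000 | _ => 0 end.

Definition beta (i : nat) : R :=
  if (21 <= i <= 49)%N then (i - 13)%:R else
  match i with
  | 1 | 2 | 3 | 4 | 5 | 6 | 7 => 1
  | 8 | 9 | 10 | 11 | 12 | 13 => 2
  | 14 | 15 => 3 | 16 => 4 | 17 => 5 | 18 | 19 => 6 | 20 => 7 | 50 => 37
  | _ => 0 end.

Definition phi (i : nat) : nat :=
  match i with
  | 1 => 0 | 2 => 1 | 3 => 2 | 4 => 3 | 5 => 4 | 6 => 5 | 7 => 6
  | 12 | 13 => 1 | _ => 0 end.

Definition gamma (i : nat) : R :=
  if (21 <= i <= 49)%N then (Num.floor ((294/1000) / t i))%:~R else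
  match i with
  | 9 | 10 | 11 | 12 | 13 | 15 | 16 | 17 | 18 => 1
  | 19 | 20 => 2 | _ => 0 end.

Definition Delta (j : nat) : R :=
  match j with
  | 1 => 294/1000 | 2 => 343/1000 | 3 => 353/1000 | 4 => 375/1000
  | 5 => 4/10 | 6 => 42/100 | _ => 0 end.

Definition vphi (i : nat) : nat :=
  let js := [seq j <- iota 1 6 | t i <= Delta j] in
  if js is j :: _ then j else 0.

(* type of an item of size x in (t_51, 1]: the i in 1..50 with x in (t_{i+1}, t_i] *)
Definition typ (x : R) : nat :=
  nth 51%N (iota 1 50) (find (fun i => t i.+1 < x) (iota 1 50)).

Definition WH (x : R) : R :=
  if x <= 1 / 50%:R then (50%:R / 49%:R) * x
  else 1 / (nth 0%N (iota 1 49) (find (fun i => 1 / (i.+1)%:R < x) (iota 1 49)))%:R.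

Definition WB (m : nat) (x : R) : R :=
  if x <= t 51 then x / (1 - 1/38) else
  let i := typ x in
  let a := alpha i in let b := beta i in let g := gamma i in
  if m == 1%N then (1 - a) / b
  else if (2 <= m <= 6)%N then
    let j := (8 - m)%N in
    if (phi i < j)%N && (vphi i < j)%N then (1 - a) / b + frac a (2 * g)
    else if (phi i < j)%N && (j <= vphi i)%N then (1 - a) / b + frac a g
    else if (j <= phi i)%N && (j <= vphi i)%N then (1 - a) / (2 * b) + frac a g
    else (1 - a) / (2 * b) + frac a (2 * g)
  else if m == 7%N then
    if (phi i == 0%N) && (vphi i == 0%N) then (1 - a) / b
    else if (phi i == 0%N) && (0 < vphi i)%N then (1 - a) / b + frac a g
    else if (0 < phi i)%N && (vphi i == 0%N) then 0
    else frac a g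
  else 0.

Definition W (i j : nat) (x y : R) : R := (WH x * WB i y + WB j x * WH y) / 2.

(* A finite multiset of rectangles (width, height), each in (0,1]x(0,1], that
   can be packed without overlap, axis-parallel and without rotation, into the
   unit square: positions pos`_k (lower-left corners) inside [0,1]^2 such that
   the open rectangles are pairwise disjoint. *)
Definition packable (X : seq (R * R)) : Prop :=
  (forall p, p \in X -> 0 < p.1 <= 1 /\ 0 < p.2 <= 1) /\
  exists pos : seq (R * R), size pos = size X /\
    (forall k, (k < size X)%N ->
       0 <= (nth (0,0) pos k).1 /\ (nth (0,0) pos k).1 + (nth (0,0) X k).1 <= 1 /\
       0 <= (nth (0,0) pos k).2 /\ (nth (0,0) pos k).2 + (nth (0,0) X k).2 <= 1) /\
    (forall k l, (k < l)%N -> (l < size X)%N ->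
       let a := nth (0,0) pos k in let b := nth (0,0) pos l in
       let p := nth (0,0) X k in let q := nth (0,0) X l in
       a.1 + p.1 <= b.1 \/ b.1 + q.1 <= a.1 \/
       a.2 + p.2 <= b.2 \/ b.2 + q.2 <= a.2).

Definition packval (i j : nat) : set (\bar R) :=
  [set ((\sum_(p <- X) W i j p.1 p.2)%:E) | X in packable].

End SHplus.

From mathcomp Require Import all_boot all_order all_algebra.
From mathcomp Require Import all_classical all_reals ereal.
Import GRing.Theory.
Local Open Scope ring_scope.

(* Reflecting a packing in the diagonal of the unit square packs the transposed
   rectangles, and transposing a rectangle turns W^{i,j} into W^{j,i}.  Hence the
   two sets of packing values coincide. *)

Section Transpose.
Variable R : realType.
Implicit Types X : seq (R * R).

Lemma nth_map_swap X k : (k < size X)%N ->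
  nth (0, 0) (map unstable.swap X) k = unstable.swap (nth (0, 0) X k).
Proof. exact: nth_map. Qed.

Lemma packable_swap X : packable X -> packable (map unstable.swap X).
Proof.
move=> [in_unit [pos [size_pos [inside disjoint]]]]; split.
  by move=> _ /mapP [p /in_unit [? ?] ->].
exists (map unstable.swap pos); rewrite !size_map; split=> //; split.
  move=> k lt_kX; have [? [? [? ?]]] := inside k lt_kX.
  by rewrite !nth_map_swap ?size_pos.
move=> k l lt_kl lt_lX; have lt_kX := ltn_trans lt_kl lt_lX.
rewrite /= !nth_map_swap ?size_pos //=.
by case: (disjoint k l lt_kl lt_lX) => [|[|[|]]] sep;
  [do 2 right; left | do 3 right | left | right; left].
Qed.

(* The weights are generalized first: letting rewrite unify WH and WB terms
   would unfold their (large) definitions. *)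
Lemma W_swap i j (x y : R) : W j i y x = W i j x y.
Proof.
rewrite /W; move: (WH x) (WH y) (WB i y) (WB j x) => a b c d.
by rewrite addrC (mulrC b) (mulrC c).
Qed.

Lemma packval_swap_sub i j : (@packval R i j `<=` @packval R j i)%classic.
Proof.
move=> _ [X /packable_swap packX <-]; exists (map unstable.swap X) => //.
rewrite big_map; apply: congr1; apply: eq_bigr => -[x y] _; exact: W_swap.
Qed.

Lemma packval_swap i j : @packval R i j = @packval R j i.
Proof. by apply/seteqP; split; exact: packval_swap_sub. Qed.

End Transpose.

Theorem lemma3 (R : realType) (i j : nat) :
  (1 <= i <= 7)%N -> (1 <= j <= 7)%N ->
  ereal_sup (@packval R i j) = ereal_sup (@packval R j i).
Proof. by move=> _ _; rewrite packval_swap. Qed.
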